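(* Let $U,V$ be nonempty sets, $A$ a fuzzy subset of $U$ and $B$ a fuzzy subset of $V$. Let $\odot$ be a semi-overlap function having $1$ as neutral element and $\rightarrow$ its residual implication. Suppose $A$ is normal, i.e. there is $u_0\in U$ with $A(u_0)=1$. If $A^*=A$, then the fuzzy subset $B^*$ of $V$ defined by $$B^*(v)=\sup_{u\in U}\big\{A^*(u)\odot[(A^*(u)\rightarrow A(u))\odot(A(u)\rightarrow B(v))]\big\}$$ satisfies $B^*=B$.
   Context: A semi-overlap function is a function $\odot:[0,1]^2\to[0,1]$ such that for all $u,v\in[0,1]$: $u\odot v=v\odot u$; if $uv=0$ then $u\odot v=0$; if $uv=1$ then $u\odot v=1$; $\odot$ is increasing in each variable; and $\odot$ is left-continuous: $u\odot\sup_{i\in I}v_i=\sup_{i\in I}(u\odot v_i)$ for every $u$ and nonempty family $\{v_i\}_{i\in I}\subseteq[0,1]$. $1$ is a neutral element if $1\odot v=v$ for all $v$. The residual implication is $a\rightarrow b=\sup\{w\in[0,1]\mid a\odot w\le b\}$. A fuzzy subset of $U$ is a function $U\to[0,1]$. (The displayed $B^*$ is the FMP-solution of the quintuple implication principle for rule $A\rightarrow B$ and input $A^*$; the paper phrases the theorem as ''the FMP problem satisfies the reversibility of QIP method''.) *)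

From Stdlib Require Import Reals.
From Coquelicot Require Import Coquelicot.
Open Scope R_scope.

Definition unit_int (x : R) : Prop := 0 <= x <= 1.

Definition supR (E : R -> Prop) : R := real (Lub_Rbar E).

Definition semi_overlap (o : R -> R -> R) : Prop :=
  (forall u v, unit_int u -> unit_int v -> unit_int (o u v)) /\
  (forall u v, unit_int u -> unit_int v -> o u v = o v u) /\
  (forall u v, unit_int u -> unit_int v -> u * v = 0 -> o u v = 0) /\
  (forall u v, unit_int u -> unit_int v -> u * v = 1 -> o u v = 1) /\
  (forall u v w, unit_int u -> unit_int v -> unit_int w -> v <= w ->
     o u v <= o u w) /\
  (forall u v w, unit_int u -> unit_int v -> unit_int w -> u <= v ->
     o u w <= o v w) /\
  (* left-continuity: u ⊙ sup v_i = sup (u ⊙ v_i) for nonempty families *)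
  (forall (I : Type) (vs : I -> R) u, unit_int u -> (exists i : I, True) ->
     (forall i, unit_int (vs i)) ->
     o u (supR (fun x => exists i, x = vs i)) =
     supR (fun x => exists i, x = o u (vs i))).

Definition one_neutral (o : R -> R -> R) : Prop :=
  forall v, unit_int v -> o 1 v = v.

Definition resid (o : R -> R -> R) (a b : R) : R :=
  supR (fun w => unit_int w /\ o a w <= b).

Definition fuzzy_subset (U : Type) (A : U -> R) : Prop :=
  forall u, unit_int (A u).

Definition qip_fmp (o : R -> R -> R) {U V : Type} (A Astar : U -> R)
  (B : V -> R) (v : V) : R :=
  supR (fun x => exists u : U,
    x = o (Astar u) (o (resid o (Astar u) (A u)) (resid o (A u) (B v)))).

(* With [A* = A] every term of the supremum collapses: [A u -> A u = 1] and [1] is neutral,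
   so the term is [A u ⊙ (A u -> B v)].  Left-continuity gives the modus ponens inequality
   [a ⊙ (a -> b) <= b], so [B v] bounds every term, and at a point [u0] with [A u0 = 1] the
   term equals [1 ⊙ (1 -> B v) = B v]. *)

From Stdlib Require Import Reals Lra.
From Coquelicot Require Import Coquelicot.
Open Scope R_scope.

Lemma supR_bounds (E : R -> Prop) (M x : R) :
  (forall y, E y -> y <= M) -> E x -> x <= supR E <= M.
Proof.
  intros Hub Hx; unfold supR.
  destruct (Lub_Rbar_correct E) as [Hsup Hleast].
  specialize (Hsup x Hx); specialize (Hleast (Finite M) Hub).
  destruct (Lub_Rbar E); simpl in *; easy.
Qed.

Lemma supR_max (E : R -> Prop) (x : R) :
  (forall y, E y -> y <= x) -> E x -> supR E = x.
Proof.
  intros Hub Hx; destruct (supR_bounds E x x Hub Hx); lra.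
Qed.

Lemma supR_ext (E F : R -> Prop) :
  (forall x, E x <-> F x) -> supR E = supR F.
Proof.
  intros HEF; unfold supR; now rewrite (Lub_Rbar_eqset E F HEF).
Qed.

Lemma unit_int_0 : unit_int 0.
Proof. unfold unit_int; lra. Qed.

Lemma unit_int_1 : unit_int 1.
Proof. unfold unit_int; lra. Qed.

Section Residuation.

Variable o : R -> R -> R.
Hypothesis Ho : semi_overlap o.

Lemma semi_overlap_comm u v :
  unit_int u -> unit_int v -> o u v = o v u.
Proof. apply Ho. Qed.

Lemma semi_overlap_0r u : unit_int u -> o u 0 = 0.
Proof.
  intros Hu; apply Ho; [exact Hu | exact unit_int_0 | ring].
Qed.

Lemma resid_set_0 a b : unit_int a -> unit_int b -> unit_int 0 /\ o a 0 <= b.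
Proof.
  intros Ha Hb; split; [exact unit_int_0|].
  rewrite semi_overlap_0r by exact Ha; apply Hb.
Qed.

Lemma resid_set_le1 a b w : unit_int w /\ o a w <= b -> w <= 1.
Proof. intros [[_ Hw] _]; exact Hw. Qed.

Lemma resid_unit a b : unit_int a -> unit_int b -> unit_int (resid o a b).
Proof.
  intros Ha Hb; unfold resid.
  destruct (supR_bounds _ 1 0 (resid_set_le1 a b) (resid_set_0 a b Ha Hb)).
  split; assumption.
Qed.

Lemma semi_overlap_left_cont (I : Type) (vs : I -> R) u :
  unit_int u -> (exists i : I, True) -> (forall i, unit_int (vs i)) ->
  o u (supR (fun x => exists i, x = vs i)) = supR (fun x => exists i, x = o u (vs i)).
Proof. apply Ho. Qed.

(* Modus ponens: left-continuity pushes [a ⊙ _] inside the supremum defining [a -> b],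
   and each [a ⊙ w] under it is [<= b]. *)
Lemma resid_mp a b : unit_int a -> unit_int b -> o a (resid o a b) <= b.
Proof.
  intros Ha Hb.
  set (W := {w : R | unit_int w /\ o a w <= b}).
  pose (w0 := exist _ 0 (resid_set_0 a b Ha Hb) : W).
  assert (Hresid : supR (fun x => exists i : W, x = proj1_sig i) = resid o a b).
  { unfold resid; apply supR_ext; intros x; split.
    - intros [[w Hw] ->]; exact Hw.
    - intros Hw; now exists (exist _ x Hw). }
  rewrite <- Hresid, semi_overlap_left_cont.
  - apply (supR_bounds _ b (o a 0)).
    + intros y [i ->]; exact (proj2 (proj2_sig i)).
    + now exists w0.
  - exact Ha.
  - now exists w0.
  - intros i; exact (proj1 (proj2_sig i)).
Qed.

Hypothesis Hn : one_neutral o.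

Lemma resid_self a : unit_int a -> resid o a a = 1.
Proof.
  intros Ha; unfold resid; apply supR_max.
  - exact (resid_set_le1 a a).
  - split; [exact unit_int_1|].
    rewrite semi_overlap_comm, Hn by (exact Ha || exact unit_int_1); lra.
Qed.

Lemma resid_1l b : unit_int b -> resid o 1 b = b.
Proof.
  intros Hb; unfold resid; apply supR_max.
  - intros y [Hy Hle]; rewrite Hn in Hle by exact Hy; exact Hle.
  - split; [exact Hb|]; rewrite Hn by exact Hb; lra.
Qed.

Lemma qip_term_self a b : unit_int a -> unit_int b ->
  o a (o (resid o a a) (resid o a b)) = o a (resid o a b).
Proof.
  intros Ha Hb; rewrite resid_self, Hn by (exact Ha || now apply resid_unit); reflexivity.
Qed.

End Residuation.

Theorem theorem4p4 (U V : Type) (u1 : U) (v1 : V)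
  (A : U -> R) (B : V -> R) (o : R -> R -> R)
  (HA : fuzzy_subset U A) (HB : fuzzy_subset V B)
  (Ho : semi_overlap o) (Hn : one_neutral o)
  (Hnorm : exists u0 : U, A u0 = 1)
  (Astar : U -> R) (Heq : Astar = A) :
  forall v : V, qip_fmp o A Astar B v = B v.
Proof.
  intros v; subst Astar; unfold qip_fmp; apply supR_max.
  - intros y [u ->]; rewrite qip_term_self by auto.
    now apply resid_mp.
  - destruct Hnorm as [u0 Hu0]; exists u0.
    rewrite qip_term_self, Hu0 by auto.
    rewrite resid_1l, Hn by auto; reflexivity.
Qed.
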